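(* Let $k$ be an odd integer with $k\ge 5$, let $D$ be a strong $k$-quasi-transitive digraph with $\mathrm{diam}(D)\ge k+2$, let $u,v\in V(D)$ with $d(u,v)=k+2$, and let $P=x_0x_1\ldots x_{k+2}$ be a shortest $(u,v)$-path with $x_0=u$, $x_{k+2}=v$. Let $O(P)=\{x_1,x_3,\ldots,x_{k+2}\}$, $E(P)=\{x_0,x_2,\ldots,x_{k+1}\}$, $I=\{x\in V(D)\setminus V(P): x\Rightarrow V(P)\}$, $W=\{x\in V(D)\setminus V(P): V(P)\Rightarrow x\}$ and $B=V(D)\setminus(V(P)\cup I\cup W)$. For any $x\in V(D)\setminus V(P)$: (1) Suppose $x\in I$. If $x\rightarrow x_i$ for some $x_i\in E(P)$, then $x\mapsto E(P)$; if $x\rightarrow x_i$ for some $x_i\in O(P)$, then $x\mapsto O(P)$. (2) Suppose $x\in W$. If $x_i\rightarrow x$ for some $x_i\in E(P)$, then $E(P)\mapsto x$; if $x_i\rightarrow x$ for some $x_i\in O(P)$, then $O(P)\mapsto x$. (3) Suppose $x\in B$. If $x$ is adjacent to some vertex of $O(P)$, then either $x$ is adjacent to every vertex of $O(P)$, or there exist $x_s,x_t\in O(P)$ with $3\le t<s\le k$ such that $\{x_s,x_{s+2},\ldots,x_{k+2}\}\mapsto x\mapsto\{x_1,x_3,\ldots,x_t\}$. If $x$ is adjacent to some vertex of $E(P)$, then either $x$ is adjacent to every vertex of $E(P)$, or there exist $x_s,x_t\in E(P)$ with $2\le t<s\le k-1$ such that $\{x_s,x_{s+2},\ldots,x_{k+1}\}\mapsto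 x\mapsto\{x_0,x_2,\ldots,x_t\}$.
   Context: All digraphs are finite, without loops or multiple arcs (opposite arcs allowed). $x\rightarrow y$ means $xy\in A(D)$; $x,y$ are adjacent if $x\rightarrow y$ or $y\rightarrow x$. For disjoint vertex sets $X,Y$ (singletons identified with vertices): $X\rightarrow Y$ means every vertex of $X$ dominates every vertex of $Y$; $X\Rightarrow Y$ means there is no arc from $Y$ to $X$; $X\mapsto Y$ means both $X\rightarrow Y$ and $X\Rightarrow Y$. For $k\ge 2$, $D$ is $k$-quasi-transitive if for every path $x_0x_1\ldots x_k$ of length $k$, $x_0$ and $x_k$ are adjacent. $d(x,y)$ is the length of a shortest $(x,y)$-path, $\mathrm{diam}(D)=\max_{x,y}d(x,y)$. *)

From mathcomp Require Import all_boot.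
Set Implicit Arguments. Unset Strict Implicit. Unset Printing Implicit Defensive.

(* A digraph on a finite vertex type T is an arc relation a : rel T
   (x -> y iff a x y); loops are excluded by a separate hypothesis. *)
Section Digraph.
Variables (T : finType) (a : rel T).

Definition adj (x y : T) : bool := a x y || a y x.

Definition has_path (x y : T) (n : nat) : Prop :=
  exists s : seq T, [/\ size s = n, uniq (x :: s), path a x s & last x s = y].

Definition dist (x y : T) (n : nat) : Prop :=
  has_path x y n /\ forall m, m < n -> ~ has_path x y m.

Definition diam_ge (n : nat) : Prop :=
  exists x y m, dist x y m /\ n <= m.

Definition strong : Prop := forall x y : T, connect a x y.

Definition k_quasi_transitive (k : nat) : Prop :=
  forall (x0 : T) (s : seq T), size s = k -> uniq (x0 :: s) -> path a x0 s ->
    adj x0 (last x0 s).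

End Digraph.

From mathcomp Require Import all_boot zify.
Set Implicit Arguments. Unset Strict Implicit. Unset Printing Implicit Defensive.

(* Fix one parity class x_p, x_(p+2), ..., x_(p+k+1) of P and a vertex y off P.
   As P is a shortest path it has no forward chords, so quasi-transitivity along P
   yields the backward arcs x_(i+k) -> x_i (i <= 2) and x_(k+2) -> x_0, and an arc
   x_i -> y -> x_j forces j <= i + 2.  Closing k-paths through y with segments of P
   and these backward arcs, an arc y -> x_j makes y adjacent to x_(j-2) and x_(j-4),
   and an arc x_j -> y makes it adjacent to x_(j+2) and x_(j+4), with a wrap-around
   at the ends of P.  Propagating these rules along the class, either y is adjacent
   to the whole class, or y |-> {first two vertices} and {last two vertices} |-> y.
   The latter is impossible when y has no arc from (resp. to) P, and otherwise it
   provides s and t in (3). *)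

(* [In l] / [Out l]: an arc into / out of a fixed vertex at position [l] of a row
   [0..K]; [Out l || In l] is adjacency. *)
Record propagation (K : nat) (In Out : nat -> bool) : Prop := {
  out_linked_pred : forall l, 0 < l <= K -> Out l -> Out l.-1 || In l.-1;
  out_linked_pred2 : forall l, 1 < l <= K -> Out l -> Out (l - 2) || In (l - 2);
  out0_linked_Kpred : Out 0 -> Out K.-1 || In K.-1;
  out1_linked_K : Out 1 -> Out K || In K;
  in_linked_succ : forall l, l < K -> In l -> Out l.+1 || In l.+1;
  in_linked_succ2 : forall l, l.+1 < K -> In l -> Out l.+2 || In l.+2;
  in_Kpred_linked0 : In K.-1 -> Out 0 || In 0;
  in_K_linked1 : In K -> Out 1 || In 1;
  out_le_in_succ : forall i j, i <= K -> j <= K -> In i -> Out j -> j <= i.+1 }.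

Arguments out_linked_pred {K In Out} _ l.
Arguments out_linked_pred2 {K In Out} _ l.
Arguments in_linked_succ {K In Out} _ l.
Arguments in_linked_succ2 {K In Out} _ l.
Arguments out_le_in_succ {K In Out} _ i j.

Section Propagation.
Variables (K : nat) (In Out : nat -> bool).
Hypotheses (K_ge3 : 3 <= K) (rules : propagation K In Out).
Local Notation linked l := (Out l || In l).

Section Unlinked.
Variable m : nat.
Hypotheses (m_le : m <= K) (m_unlinked : ~~ linked m).

Lemma linked_neq l : linked l -> l != m.
Proof. by apply: contraTneq => ->. Qed.

Lemma not_in_below l : l < m -> ~~ In l.
Proof.
move: {2}(m - l) (leqnn (m - l)) => d; elim: d l => [|d IHd] l ld lm; first lia.
apply/negP=> inl.
have link1 := in_linked_succ rules l (leq_trans lm m_le) inl.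
have lm1 : l.+1 < m by rewrite ltn_neqAle (linked_neq link1).
case/orP: link1 => [outl1 | inl1]; last first.
  by move: (IHd l.+1 ltac:(lia) lm1); rewrite inl1.
have link2 := in_linked_succ2 rules l (leq_trans lm1 m_le) inl.
have lm2 : l.+2 < m by rewrite ltn_neqAle (linked_neq link2).
case/orP: link2 => [outl2 | inl2].
  by have := out_le_in_succ rules l l.+2 ltac:(lia) ltac:(lia) inl outl2; lia.
by move: (IHd l.+2 ltac:(lia) lm2); rewrite inl2.
Qed.

Lemma not_out_above l : m < l <= K -> ~~ Out l.
Proof.
move: {2}(l - m) (leqnn (l - m)) => d; elim: d l => [|d IHd] l ld /andP[ml lK]; first lia.
apply/negP=> outl.
have link1 := out_linked_pred rules l ltac:(lia) outl.
have ml1 : m < l.-1 by rewrite ltn_neqAle eq_sym (linked_neq link1); lia.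
case/orP: link1 => [outl1 | inl1].
  by move: (IHd l.-1 ltac:(lia) ltac:(lia)); rewrite outl1.
have link2 := out_linked_pred2 rules l ltac:(lia) outl.
have ml2 : m < l - 2 by rewrite ltn_neqAle eq_sym (linked_neq link2); lia.
case/orP: link2 => [outl2 | inl2].
  by move: (IHd (l - 2) ltac:(lia) ltac:(lia)); rewrite outl2.
by have := out_le_in_succ rules (l - 2) l ltac:(lia) lK inl2 outl; lia.
Qed.

Lemma linked_below_out l : l < m -> linked l -> Out l.
Proof. by move=> /not_in_below /negbTE ->; rewrite orbF. Qed.

Lemma linked_above_in l : m < l <= K -> linked l -> In l.
Proof. by move=> /not_out_above /negbTE ->. Qed.

Lemma linked_below_closed l l' : l <= l' < m -> linked l' -> linked l.
Proof.
elim: l' => [|l' IHl'] /andP[ll' l'm] link; first by rewrite leqn0 in ll'; rewrite (eqP ll').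
case: (eqVneq l l'.+1) => [-> // | nel].
apply: IHl'; first lia.
exact: (out_linked_pred rules l'.+1 ltac:(lia) (linked_below_out l'm link)).
Qed.

Lemma linked_above_closed l l' : m < l <= l' -> l' <= K -> linked l -> linked l'.
Proof.
elim: l' => [|l' IHl'] /andP[ml ll'] l'K link; first lia.
case: (eqVneq l l'.+1) => [<- // | nel].
have link' : linked l' by apply: IHl'; lia.
exact: (in_linked_succ rules l' l'K (@linked_above_in l' ltac:(lia) link')).
Qed.

Lemma linked0_in_pred : linked 0 -> m < K.-1 /\ In K.-1.
Proof.
move=> link0.
have m_gt0 : 0 < m by have := linked_neq link0; lia.
have linkKp := out0_linked_Kpred rules (linked_below_out m_gt0 link0).
have mKp : m < K.-1.
  have neKp := linked_neq linkKp.
  rewrite ltnNge; apply/negP=> Kpm.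
  have link1 := @linked_below_closed 1 K.-1 ltac:(lia) linkKp.
  have mK : m = K by lia.
  by move: m_unlinked; rewrite mK (out1_linked_K rules (@linked_below_out 1 ltac:(lia) link1)).
by split; last apply: linked_above_in linkKp; lia.
Qed.

Lemma linkedK_out1 : linked K -> 1 < m /\ Out 1.
Proof.
move=> linkK.
have mK : m < K by have := linked_neq linkK; lia.
have link1 := in_K_linked1 rules (@linked_above_in K ltac:(lia) linkK).
have m1 : 1 < m.
  have ne1 := linked_neq link1.
  rewrite ltnNge; apply/negP=> m_le1.
  have m0 : 0 = m by lia.
  have linkKp := @linked_above_closed 1 K.-1 ltac:(lia) ltac:(lia) link1.
  have inKp := @linked_above_in K.-1 ltac:(lia) linkKp.
  by move: m_unlinked; rewrite -m0 (in_Kpred_linked0 rules inKp).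
by split; last apply: linked_below_out link1.
Qed.

End Unlinked.

Lemma propagation_dichotomy :
  (exists l, l <= K /\ linked l) ->
  (forall l, l <= K -> linked l) \/
  ((forall l, l <= 1 -> Out l && ~~ In l) /\
   (forall l, K.-1 <= l <= K -> In l && ~~ Out l)).
Proof.
move=> [l0 [l0K link_l0]].
have [all_linked | /allPn [m]] := boolP (all (fun l => linked l) (iota 0 K.+1)).
  by left=> l lK; apply: (allP all_linked); rewrite mem_iota.
rewrite mem_iota add0n => /andP[_ mK] m_unlinked; right.
have [[mKp inKp] [m1 out1]] : (m < K.-1 /\ In K.-1) /\ (1 < m /\ Out 1).
  have: linked 0 \/ linked K.
    case: (ltngtP l0 m) => [l0m | ml0 | l0m]; last by move: m_unlinked; rewrite -l0m link_l0.
      by left; apply: (@linked_below_closed m mK m_unlinked 0 l0); rewrite ?l0m.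
    by right; apply: (@linked_above_closed m mK m_unlinked l0 K); rewrite ?ml0.
  case=> [link0 | linkK].
    have [mKp inKp] := linked0_in_pred mK m_unlinked link0.
    split=> //; apply: linkedK_out1 => //.
    by move: (in_linked_succ rules K.-1 ltac:(lia) inKp); rewrite prednK //; lia.
  have [m1 out1] := linkedK_out1 mK m_unlinked linkK.
  split=> //; apply: linked0_in_pred => //.
  exact: (out_linked_pred rules 1 ltac:(lia) out1).
split=> l l_end.
  rewrite (@not_in_below m mK m_unlinked l ltac:(lia)) andbT.
  case: l l_end => [|[|]] // _.
  apply: (@linked_below_out m mK m_unlinked 0 ltac:(lia)).
  exact: (out_linked_pred rules 1 ltac:(lia) out1).
rewrite (@not_out_above m mK m_unlinked l ltac:(lia)) andbT.
have [-> | lK] := eqVneq l K.-1; first exact: inKp.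
have -> : l = K.-1.+1 by lia.
apply: (@linked_above_in m mK m_unlinked K.-1.+1 ltac:(lia)).
exact: (in_linked_succ rules K.-1 ltac:(lia) inKp).
Qed.

End Propagation.

Ltac iota_bookkeeping :=
  repeat match goal with
  | |- is_true (uniq (_ ++ _)) => rewrite cat_uniq
  | |- is_true (uniq (_ :: _)) => rewrite cons_uniq
  | |- is_true (uniq (iota _ _)) => exact: iota_uniq
  | |- is_true (uniq [::]) => done
  | |- is_true (_ && _) => apply/andP; split
  | |- is_true (all _ _) => apply/allP => ? /=
  | |- is_true (~~ has _ _) => apply/hasPn => ? /=
  end;
  rewrite ?(mem_cat, mem_iota, in_cons, in_nil, orbF); lia.

Lemma last_iota i n : last i (iota i.+1 n) = i + n.
Proof. by elim: n i => [|n IHn] i /=; rewrite ?addn0 ?IHn ?addnS. Qed.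

(* The digraph induced by P and y, with x_i numbered i and y numbered k + 3. *)
Section InducedGraph.
Variables (k : nat) (R : rel nat).
Local Notation y := (k + 3).
Local Notation within := (all (fun n => n <= k + 3)).
Local Notation adj_y j := (R y j || R j y).

Hypothesis k_ge5 : 5 <= k.
Hypothesis quasi_trans : forall i s, path R i s -> size s = k -> uniq (i :: s) ->
  within (i :: s) -> R i (last i s) || R (last i s) i.
Hypothesis geodesic : forall s, path R 0 s -> uniq (0 :: s) -> within (0 :: s) ->
  last 0 s = k + 2 -> k + 2 <= size s.
Hypothesis path_arc : forall i, i < k + 2 -> R i i.+1.

Lemma iota_path i n : i + n <= k + 2 -> path R i (iota i.+1 n).
Proof.
elim: n i => [|n IHn] i le_in //=.
by rewrite path_arc ?IHn //; lia.
Qed.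

Lemma no_forward_chord i j : i.+1 < j <= k + 2 -> ~~ R i j.
Proof.
move=> ij; apply/negP=> Rij.
have walk : path R 0 (iota 1 i ++ j :: iota j.+1 (k + 2 - j)).
  rewrite cat_path iota_path ?last_iota /= ?Rij ?iota_path //; lia.
have := geodesic walk; rewrite size_cat /= !size_iota last_cat /= last_iota.
by move=> /(_ ltac:(iota_bookkeeping) ltac:(iota_bookkeeping)); lia.
Qed.

Lemma detour_short i j : i <= k + 2 -> j <= k + 2 -> R i y -> R y j -> j <= i.+2.
Proof.
move=> ik jk Riy Ryj; rewrite leqNgt; apply/negP=> ij.
have walk : path R 0 (iota 1 i ++ y :: j :: iota j.+1 (k + 2 - j)).
  rewrite cat_path iota_path ?last_iota /= ?Riy ?Ryj ?iota_path //; lia.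
have := geodesic walk; rewrite size_cat /= !size_iota last_cat /= last_iota.
by move=> /(_ ltac:(iota_bookkeeping) ltac:(iota_bookkeeping)); lia.
Qed.

Lemma back_arc i : i <= 2 -> R (i + k) i.
Proof.
move=> i2.
have := quasi_trans (@iota_path i k ltac:(lia)).
rewrite size_iota last_iota => /(_ erefl ltac:(iota_bookkeeping) ltac:(iota_bookkeeping)).
by rewrite (negbTE (@no_forward_chord i (i + k) ltac:(lia))).
Qed.

Lemma back_arc_long : R (k + 2) 0.
Proof.
have walk : path R (k + 2) (2 :: iota 3 (k - 2) ++ [:: 0]).
  rewrite /= cat_path iota_path ?last_iota /=; last lia.
  have -> : 2 + (k - 2) = 0 + k by lia.
  by rewrite back_arc // [k + 2]addnC back_arc.
have := quasi_trans walk; rewrite /= last_cat size_cat size_iota /=.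
move=> /(_ ltac:(lia) ltac:(iota_bookkeeping) ltac:(iota_bookkeeping)).
by rewrite (negbTE (@no_forward_chord 0 (k + 2) ltac:(lia))) orbF.
Qed.

Lemma out_adj_via_back_arc j b c m : j <= b <= k + 2 -> c <= m < j ->
  (b - j) + (m - c) + 2 = k -> R b c -> R y j -> adj_y m.
Proof.
move=> jb cm len Rbc Ryj.
have walk : path R y (j :: iota j.+1 (b - j) ++ c :: iota c.+1 (m - c)).
  rewrite /= Ryj cat_path iota_path ?last_iota ?subnKC /= ?Rbc ?iota_path //; lia.
have := quasi_trans walk; rewrite /= last_cat /= last_iota subnKC; last lia.
apply; rewrite ?size_cat /= ?size_iota; try iota_bookkeeping; lia.
Qed.

Lemma out_adj_along_path j : j <= 3 -> R y j -> adj_y (j + k.-1).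
Proof.
move=> j3 Ryj.
have walk : path R y (j :: iota j.+1 k.-1) by rewrite /= Ryj iota_path //; lia.
have := quasi_trans walk; rewrite /= last_iota.
apply; rewrite ?size_iota; try iota_bookkeeping; lia.
Qed.

Lemma in_adj_via_back_arc p b c j : c <= j < p -> p <= b <= k + 2 ->
  (b - p) + (j - c) + 2 = k -> R b c -> R j y -> adj_y p.
Proof.
move=> cj pb len Rbc Rjy.
have walk : path R p (iota p.+1 (b - p) ++ c :: iota c.+1 (j - c) ++ [:: y]).
  rewrite cat_path iota_path ?last_iota ?subnKC /= ?Rbc //; try lia.
  by rewrite cat_path iota_path ?last_iota ?subnKC /= ?Rjy //; lia.
have := quasi_trans walk; rewrite last_cat /= last_cat /= orbC.
apply; rewrite ?size_cat /= ?size_cat ?size_iota /=; try iota_bookkeeping; lia.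
Qed.

Lemma in_adj_along_path j : j <= 3 -> R (j + k.-1) y -> adj_y j.
Proof.
move=> j3 Rjy.
have walk : path R j (iota j.+1 k.-1 ++ [:: y]).
  by rewrite cat_path iota_path ?last_iota /= ?Rjy //; lia.
have := quasi_trans walk; rewrite last_cat /= orbC.
apply; rewrite ?size_cat ?size_iota /=; try iota_bookkeeping; lia.
Qed.

Lemma out_adj_sub2 j : 2 <= j <= k + 2 -> R y j -> adj_y (j - 2).
Proof.
move=> jk; set b := maxn j k; apply: (@out_adj_via_back_arc j b (b - k)); try lia.
by rewrite -{1}[b](@subnK k) ?back_arc //; lia.
Qed.

Lemma out_adj_sub4 j : 4 <= j <= k + 2 -> R y j -> adj_y (j - 4).
Proof.
move=> jk; apply: (@out_adj_via_back_arc j (k + 2) 0); rewrite ?back_arc_long //; lia.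
Qed.

Lemma in_adj_add2 j : j <= k -> R j y -> adj_y (j + 2).
Proof.
move=> jk; set b := maxn (j + 2) k; apply: (@in_adj_via_back_arc _ b (b - k)); try lia.
by rewrite -{1}[b](@subnK k) ?back_arc //; lia.
Qed.

Lemma in_adj_add4 j : j + 2 <= k -> R j y -> adj_y (j + 4).
Proof.
move=> jk; apply: (@in_adj_via_back_arc _ (k + 2) 0); rewrite ?back_arc_long //; lia.
Qed.

Lemma class_propagation (p : bool) h : k = h.*2.+1 ->
  propagation h.+1 (fun l => R (p + l.*2) y) (fun l => R y (p + l.*2)).
Proof.
move=> kh; split; rewrite /= ?double0 ?addn0.
- move=> l lK; have -> : p + l.-1.*2 = p + l.*2 - 2 by lia.
  by apply: out_adj_sub2; lia.
- move=> l lK; have -> : p + (l - 2).*2 = p + l.*2 - 4 by lia.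
  by apply: out_adj_sub4; lia.
- have -> : p + h.*2 = p + k.-1 by lia.
  by apply: out_adj_along_path; lia.
- have -> : p + h.+1.*2 = p + 2 + k.-1 by lia.
  by apply: (@out_adj_along_path (p + 1.*2)); lia.
- move=> l lK; have -> : p + l.+1.*2 = p + l.*2 + 2 by lia.
  by apply: in_adj_add2; lia.
- move=> l lK; have -> : p + l.+2.*2 = p + l.*2 + 4 by lia.
  by apply: in_adj_add4; lia.
- have -> : p + h.*2 = p + k.-1 by lia.
  by apply: in_adj_along_path; lia.
- have -> : p + h.+1.*2 = p + 1.*2 + k.-1 by lia.
  by apply: in_adj_along_path; lia.
- move=> i j iK jK Riy Ryj; have := detour_short _ _ Riy Ryj; lia.
Qed.

Lemma class_dichotomy (p : bool) i : odd k -> i <= k + 2 -> odd i = p -> adj_y i ->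
  (forall j, j <= k + 2 -> odd j = p -> adj_y j) \/
  ((forall j, j <= 3 -> odd j = p -> R y j && ~~ R j y) /\
   (forall j, k.-1 <= j <= k + 2 -> odd j = p -> R j y && ~~ R y j)).
Proof.
move=> odd_k ik odd_i adj_i.
have kh : k = (k./2).*2.+1 by rewrite -[in LHS](odd_double_half k) odd_k.
have class_pos j : odd j = p -> j = p + (j./2).*2 by move=> <-; rewrite odd_double_half.
have := propagation_dichotomy _ (class_propagation p kh).
case=> [||all_adj|[low high]]; first lia.
- by exists i./2; rewrite -class_pos //; split=> //; lia.
- by left=> j jk /class_pos jE; rewrite jE; apply: all_adj; lia.
right; split=> j jb /class_pos jE; rewrite jE.
  by apply: low; lia.
by apply: high; lia.
Qed.

End InducedGraph.

Section PathInDigraph.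
Variables (T : finType) (a : rel T) (k : nat) (x : nat -> T) (y : T).
Hypotheses (k_odd : odd k) (k_ge5 : 5 <= k) (quasi_trans : k_quasi_transitive a k)
  (geodesic : dist a (x 0) (x (k + 2)) (k + 2))
  (x_arc : forall i, i < k + 2 -> a (x i) (x i.+1))
  (x_inj : forall i j, i <= k + 2 -> j <= k + 2 -> x i = x j -> i = j)
  (y_off : forall i, i <= k + 2 -> y <> x i).

Definition vertex n := if n <= k + 2 then x n else y.

Definition induced : rel nat := fun i j => a (vertex i) (vertex j).

Lemma vertex_path i : i <= k + 2 -> vertex i = x i.
Proof. by rewrite /vertex => ->. Qed.

Lemma vertex_y : vertex (k + 3) = y.
Proof. by rewrite /vertex ifN //; lia. Qed.

Lemma uniq_map_vertex s : all (fun n => n <= k + 3) s -> uniq (map vertex s) = uniq s.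
Proof.
move=> /allP s_le; apply: map_inj_in_uniq => i j /s_le i_le /s_le j_le.
rewrite /vertex; case: ifP => ik; case: ifP => jk.
- exact: x_inj.
- by move/esym/(y_off ik).
- by move/(y_off jk).
- lia.
Qed.

Lemma induced_quasi_transitive i s : path induced i s -> size s = k -> uniq (i :: s) ->
  all (fun n => n <= k + 3) (i :: s) -> induced i (last i s) || induced (last i s) i.
Proof.
move=> walk size_s uniq_s le_s.
have := quasi_trans (s := map vertex s) (x0 := vertex i).
by rewrite size_map last_map -map_cons uniq_map_vertex // path_map; apply.
Qed.

Lemma induced_geodesic s : path induced 0 s -> uniq (0 :: s) ->
  all (fun n => n <= k + 3) (0 :: s) -> last 0 s = k + 2 -> k + 2 <= size s.
Proof.
move=> walk uniq_s le_s end_s; rewrite leqNgt; apply/negP => short.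
apply: (geodesic.2 _ short); exists (map vertex s).
rewrite size_map -vertex_path // -map_cons uniq_map_vertex // path_map last_map.
by rewrite end_s vertex_path.
Qed.

Lemma induced_path_arc i : i < k + 2 -> induced i i.+1.
Proof. by move=> ik; rewrite /induced !vertex_path //; [apply: x_arc | lia..]. Qed.

Lemma induced_arcs_y j : j <= k + 2 ->
  induced (k + 3) j = a y (x j) /\ induced j (k + 3) = a (x j) y.
Proof. by move=> jk; rewrite /induced vertex_y vertex_path. Qed.

Lemma path_class_dichotomy (p : bool) i : i <= k + 2 -> odd i = p -> adj a y (x i) ->
  (forall j, j <= k + 2 -> odd j = p -> adj a y (x j)) \/
  ((forall j, j <= 3 -> odd j = p -> a y (x j) && ~~ a (x j) y) /\
   (forall j, k.-1 <= j <= k + 2 -> odd j = p -> a (x j) y && ~~ a y (x j))).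
Proof.
move=> ik odd_i adj_i.
have := class_dichotomy k_ge5 induced_quasi_transitive induced_geodesic induced_path_arc
  k_odd ik odd_i.
case: (induced_arcs_y ik) => -> ->; case/(_ adj_i) => [all_adj | [low high]].
  by left=> j jk odd_j; rewrite /adj; case: (induced_arcs_y jk) => <- <-; apply: all_adj.
right; split=> j jb odd_j; have jk : j <= k + 2 by lia.
  by case: (induced_arcs_y jk) => <- <-; apply: low.
by case: (induced_arcs_y jk) => <- <-; apply: high.
Qed.

Lemma dominated_class (p : bool) i : (forall j, j <= k + 2 -> ~~ a (x j) y) ->
  i <= k + 2 -> odd i = p -> a y (x i) ->
  forall j, j <= k + 2 -> odd j = p -> a y (x j) && ~~ a (x j) y.
Proof.
move=> no_in ik odd_i yi.
case: (path_class_dichotomy ik odd_i) => [|all_adj|[_ high]]; first by rewrite /adj yi.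
  move=> j jk odd_j; have := all_adj j jk odd_j.
  by rewrite /adj (negbTE (no_in j jk)) orbF => ->.
have odd_last : odd (k.+1 + p) = p by rewrite oddD /= k_odd oddb.
have := high (k.+1 + p) ltac:(lia) odd_last.
by rewrite (negbTE (no_in _ _)) //; lia.
Qed.

Lemma dominating_class (p : bool) i : (forall j, j <= k + 2 -> ~~ a y (x j)) ->
  i <= k + 2 -> odd i = p -> a (x i) y ->
  forall j, j <= k + 2 -> odd j = p -> a (x j) y && ~~ a y (x j).
Proof.
move=> no_out ik odd_i iy.
case: (path_class_dichotomy ik odd_i) => [|all_adj|[low _]]; first by rewrite /adj iy orbT.
  move=> j jk odd_j; have := all_adj j jk odd_j.
  by rewrite /adj (negbTE (no_out j jk)) /= => ->.
have := low p ltac:(lia) (oddb p).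
by rewrite (negbTE (no_out _ _)) //; lia.
Qed.

End PathInDigraph.

Theorem lemma2p10 (T : finType) (a : rel T) (k : nat)
  (Hloop : forall z : T, ~~ a z z)
  (Hk : odd k) (Hk5 : 5 <= k)
  (Hstrong : strong a) (Hqt : k_quasi_transitive a k)
  (Hdiam : diam_ge a (k + 2))
  (u v : T) (Huv : dist a u v (k + 2))
  (x : nat -> T)
  (Hx0 : x 0 = u) (Hxv : x (k + 2) = v)
  (Harc : forall i, i < k + 2 -> a (x i) (x i.+1))
  (Hinj : forall i j, i <= k + 2 -> j <= k + 2 -> x i = x j -> i = j) :
  forall y : T, (forall i, i <= k + 2 -> y <> x i) ->
  (* (1) y in I *)
  ((forall i, i <= k + 2 -> ~~ a (x i) y) ->
     ((exists i, [/\ i <= k + 2, ~~ odd i & a y (x i)]) ->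
        forall j, j <= k + 2 -> ~~ odd j -> a y (x j) && ~~ a (x j) y) /\
     ((exists i, [/\ i <= k + 2, odd i & a y (x i)]) ->
        forall j, j <= k + 2 -> odd j -> a y (x j) && ~~ a (x j) y)) /\
  (* (2) y in W *)
  ((forall i, i <= k + 2 -> ~~ a y (x i)) ->
     ((exists i, [/\ i <= k + 2, ~~ odd i & a (x i) y]) ->
        forall j, j <= k + 2 -> ~~ odd j -> a (x j) y && ~~ a y (x j)) /\
     ((exists i, [/\ i <= k + 2, odd i & a (x i) y]) ->
        forall j, j <= k + 2 -> odd j -> a (x j) y && ~~ a y (x j))) /\
  (* (3) y in B *)
  ((exists i, i <= k + 2 /\ a (x i) y) ->
   (exists i, i <= k + 2 /\ a y (x i)) ->
     ((exists i, [/\ i <= k + 2, odd i & adj a y (x i)]) ->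
        (forall j, j <= k + 2 -> odd j -> adj a y (x j)) \/
        (exists s t, [/\ odd s, odd t, 3 <= t, t < s & s <= k] /\
           (forall j, s <= j <= k + 2 -> odd j -> a (x j) y && ~~ a y (x j)) /\
           (forall j, 1 <= j <= t -> odd j -> a y (x j) && ~~ a (x j) y))) /\
     ((exists i, [/\ i <= k + 2, ~~ odd i & adj a y (x i)]) ->
        (forall j, j <= k + 2 -> ~~ odd j -> adj a y (x j)) \/
        (exists s t, [/\ ~~ odd s, ~~ odd t, 2 <= t, t < s & s <= k - 1] /\
           (forall j, s <= j <= k + 1 -> ~~ odd j -> a (x j) y && ~~ a y (x j)) /\
           (forall j, j <= t -> ~~ odd j -> a y (x j) && ~~ a (x j) y)))).
Proof.
move=> y y_off; subst u v.
have dominated := dominated_class Hk Hk5 Hqt Huv Harc Hinj y_off.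
have dominating := dominating_class Hk Hk5 Hqt Huv Harc Hinj y_off.
have dichotomy := path_class_dichotomy Hk Hk5 Hqt Huv Harc Hinj y_off.
split; [|split].
- move=> no_in; split=>
    [[i [ik /negbTE odd_i yi]] j jk /negbTE odd_j | [i [ik odd_i yi]] j jk odd_j];
    exact: dominated no_in ik odd_i yi _ jk odd_j.
- move=> no_out; split=>
    [[i [ik /negbTE odd_i iy]] j jk /negbTE odd_j | [i [ik odd_i iy]] j jk odd_j];
    exact: dominating no_out ik odd_i iy _ jk odd_j.
move=> _ _; split=> [[i [ik odd_i adj_i]] | [i [ik /negbTE odd_i adj_i]]].
  case: (dichotomy _ _ ik odd_i adj_i) => [all_adj | [low high]]; [left | right].
    by move=> j jk odd_j; apply: all_adj.
  exists k, 3; split; first by split=> //; lia.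
  by split=> j jb odd_j; [apply: high | apply: low] => //; lia.
case: (dichotomy _ _ ik odd_i adj_i) => [all_adj | [low high]]; [left | right].
  by move=> j jk /negbTE odd_j; apply: all_adj.
exists (k - 1), 2; split; first by split=> //; rewrite ?oddB ?Hk //; lia.
by split=> j jb /negbTE odd_j; [apply: high | apply: low] => //; lia.
Qed.
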